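(* Let $G$ be a graph with $\operatorname{diam}(\overline{G})=2$. Then $\gamma(G)=2$ if and only if $pav(\overline{G},0)>0$.
   Context: All graphs are finite, simple and undirected; $\overline{G}$ is the complement, $\operatorname{diam}$ the diameter and $\gamma$ the domination number. For a graph $F$ and integer $i\ge 0$, $pav(F,i)$ is the number of pairs of adjacent vertices of $F$ joined by exactly $i$ paths of length two (equivalently, having exactly $i$ common neighbours). *)

From mathcomp Require Import all_boot.
Set Implicit Arguments. Unset Strict Implicit. Unset Printing Implicit Defensive.

Definition simple_graph (T : finType) (e : rel T) : Prop :=
  symmetric e /\ irreflexive e.

Definition compl_graph (T : finType) (e : rel T) : rel T :=
  fun x y => (x != y) && ~~ e x y.

Definition dist_le (T : finType) (e : rel T) (k : nat) (x y : T) : Prop :=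
  exists p : seq T, [/\ size p <= k, path e x p & last x p = y].

(* diameter equals d: all distances are finite and <= d, and some distance exceeds d-1.
   (a disconnected graph has infinite diameter, hence diameter <> d) *)
Definition diam_eq (T : finType) (e : rel T) (d : nat) : Prop :=
  (forall x y, dist_le e d x y) /\ (exists x y, ~ dist_le e d.-1 x y).

Definition dominating (T : finType) (e : rel T) (D : {set T}) : bool :=
  [forall x, (x \in D) || [exists y in D, e x y]].

(* domination number: minimum size of a dominating set (T itself dominates) *)
Definition domination_number (T : finType) (e : rel T) : nat :=
  \big[minn/#|T|]_(D : {set T} | dominating e D) #|D|.

(* pav F i: number of (unordered) pairs of adjacent vertices with exactly i common
   neighbours; counted as ordered pairs divided by 2 (F symmetric). *)
Definition pav (T : finType) (F : rel T) (i : nat) : nat :=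
  #|[set p : T * T | F p.1 p.2 && (#|[set z | F p.1 z && F p.2 z]| == i)]| %/ 2.

From mathcomp Require Import all_boot.
Set Implicit Arguments. Unset Strict Implicit. Unset Printing Implicit Defensive.

(* Writing H for the complement of G: a vertex z lies outside the closed
   G-neighbourhoods of x and y exactly when z is a common H-neighbour of x and y.
   Hence {x, y} dominates G iff x and y have no common H-neighbour, and such a pair
   is H-adjacent when diam H = 2; these H-edges are the pairs counted by pav H 0.
   Conversely, diam H = 2 leaves H without isolated vertices, so no single vertex
   dominates G and gamma(G) >= 2. *)

Section DominationNumber.

Variables (T : finType) (e : rel T).

Lemma domination_number_le_card (D : {set T}) :
  dominating e D -> domination_number e <= #|D|.
Proof.
move=> domD; rewrite /domination_number.
have : D \in index_enum {set T} by rewrite mem_index_enum.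
elim: (index_enum _) => [//|A r IHr]; rewrite inE big_cons.
case/orP => [/eqP <-|/IHr le_r]; first by rewrite domD geq_minl.
by case: ifP => _ //; apply: leq_trans (geq_minr _ _) le_r.
Qed.

Lemma domination_number_attained :
  exists2 D : {set T}, dominating e D & domination_number e = #|D|.
Proof.
apply: (big_ind (fun n => exists2 D : {set T}, dominating e D & n = #|D|)).
- by exists setT; [apply/forallP => x; rewrite in_setT | rewrite cardsT].
- move=> _ _ [D1 dom1 ->] [D2 dom2 ->].
  case: (leqP #|D1| #|D2|) => [le12|/ltnW le21].
  + by exists D1; rewrite ?(minn_idPl le12).
  + by exists D2; rewrite ?(minn_idPr le21).
- by move=> D domD; exists D.
Qed.

End DominationNumber.

Definition common_nbrs (T : finType) (F : rel T) (x y : T) : {set T} :=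
  [set z | F x z && F y z].

Lemma common_nbrsC (T : finType) (F : rel T) (x y : T) :
  common_nbrs F x y = common_nbrs F y x.
Proof. by apply/setP => z; rewrite !inE andbC. Qed.

Lemma pav_gt0P (T : finType) (F : rel T) (i : nat) :
  symmetric F -> irreflexive F ->
  reflect (exists x y, F x y /\ #|common_nbrs F x y| = i) (0 < pav F i).
Proof.
move=> Fsym Firr.
have -> : pav F i = #|[set p | F p.1 p.2 && (#|common_nbrs F p.1 p.2| == i)]| %/ 2.
  by [].
rewrite divn_gt0 //; apply: (iffP idP).
- case/ltnW/card_gt0P => -[x y]; rewrite inE => /andP [Fxy /eqP ci].
  by exists x, y.
- move=> [x [y [Fxy ci]]]; apply/card_gt1P; exists (x, y), (y, x).
  rewrite !inE /= Fxy Fsym Fxy [common_nbrs F y x]common_nbrsC ci eqxx; split=> //.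
  by apply/negP => /eqP [exy _]; rewrite exy Firr in Fxy.
Qed.

Section Complement.

Variables (T : finType) (e : rel T).

Lemma compl_graph_irr : irreflexive (compl_graph e).
Proof. by move=> x; rewrite /compl_graph eqxx. Qed.

Hypothesis e_sym : symmetric e.

Lemma compl_graph_sym : symmetric (compl_graph e).
Proof. by move=> x y; rewrite /compl_graph eq_sym e_sym. Qed.

Lemma dominating_set2E (x y : T) :
  dominating e [set x; y] = (common_nbrs (compl_graph e) x y == set0).
Proof.
rewrite set0_Nexists negb_exists /dominating; apply: eq_forallb => z.
have -> : [exists w in [set x; y], e z w] = e z x || e z y.
  apply/existsP/orP => [[w]|[ezx|ezy]].
  - by rewrite !inE => /andP [/orP [] /eqP -> ->]; [left | right].
  - by exists x; rewrite !inE eqxx ezx.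
  - by exists y; rewrite !inE eqxx ezy orbT.
rewrite !inE /compl_graph ![_ == z]eq_sym ![e _ z]e_sym.
by case: (z == x); case: (z == y); case: (e z x); case: (e z y).
Qed.

Lemma domination_number_gt1 (t : T) :
  (forall v, exists w, compl_graph e v w) -> 1 < domination_number e.
Proof.
move=> no_isolated; have [D domD ->] := domination_number_attained e.
rewrite ltnNge leq_eqVlt ltnS leqn0 cards_eq0; apply/negP; case/orP.
- case/cards1P => v defD; have [w] := no_isolated v.
  move/forallP: domD => /(_ w); rewrite defD /compl_graph !inE eq_sym.
  case: eqP => //= _ /existsP [u]; rewrite inE => /andP [/eqP -> ewv].
  by rewrite e_sym ewv.
- move/eqP=> D0; move/forallP: domD => /(_ t).
  by rewrite D0 inE /=; case/existsP => u; rewrite inE.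
Qed.

End Complement.

Section Distance.

Variables (T : finType) (F : rel T).

Lemma dist_le2_cases (x y : T) :
  dist_le F 2 x y -> [\/ x = y, F x y | exists2 z, F x z & F z y].
Proof.
case=> -[|a [|b [|c p]]] [] //= _.
- by move=> _ <-; constructor 1.
- by rewrite andbT => Fxa <-; constructor 2.
- by case/and3P => Fxa Fab _ <-; constructor 3; exists a.
Qed.

Lemma diam_eq_no_isolated (d : nat) :
  diam_eq F d -> forall x, exists y, F x y.
Proof.
case=> dist [x0 [y0 far]] x.
have [w neq_xw] : exists w, x != w.
  case: (eqVneq x x0) => [-> | ]; last by exists x0.
  by exists y0; apply/eqP => eq0; apply: far; exists [::]; rewrite eq0.
have [[|z p] [_ /= + last_p]] := dist x w; first by rewrite last_p eqxx in neq_xw.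
by case/andP => Fxz _; exists z.
Qed.

End Distance.

Theorem lemma9 (T : finType) (e : rel T) :
  simple_graph e ->
  diam_eq (compl_graph e) 2 ->
  (domination_number e = 2 <-> 0 < pav (compl_graph e) 0).
Proof.
move=> [e_sym _] diam2.
have [dist2 [x0 _]] := diam2.
have compl_sym := compl_graph_sym e_sym.
have pavP := pav_gt0P 0 compl_sym (@compl_graph_irr _ e).
split=> [gamma2 | /pavP [x [y [Hxy /eqP no_common]]]].
- have [D domD cardD] := domination_number_attained e.
  have /cards2P [x [y [neq_xy defD]]] : #|D| == 2 by rewrite -cardD gamma2.
  rewrite defD dominating_set2E // in domD.
  apply/pavP; exists x, y; split; last by apply/eqP; rewrite cards_eq0.
  case: (dist_le2_cases (dist2 x y)) => [exy | // | [z Hxz Hzy]].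
    by rewrite exy eqxx in neq_xy.
  by move/eqP/setP: domD => /(_ z); rewrite !inE Hxz (compl_sym y) Hzy.
- have neq_xy : x != y by apply: contraTneq Hxy => ->; rewrite compl_graph_irr.
  have domxy : dominating e [set x; y] by rewrite dominating_set2E // -cards_eq0.
  apply/eqP; rewrite eqn_leq (domination_number_gt1 e_sym x0) ?andbT.
    by apply: leq_trans (domination_number_le_card domxy) _; rewrite cards2 neq_xy.
  exact: diam_eq_no_isolated diam2.
Qed.
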